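(* Let $R=\mathbb{Z}$ or $\mathbb{Z}[i]$ with fraction field $K$, let $1\leq k<n$, and let $A_0=(a_1|\dots|a_k)\in R^{n\times k}$ be a $k$-icube of norm $\lambda$. Then (1) the $R$-module $\Lambda=\{w\in R^n: a_j^*w=0 \text{ for } 1\leq j\leq k\}$ is free of rank $n-k$; (2) if $Q$ denotes the restriction of the standard form $(x,y)\mapsto x^*y$ to $\Lambda$ and $\mathrm{disc}(Q)$ the determinant of its Gram matrix with respect to an $R$-basis of $\Lambda$, then $\mathrm{disc}(Q)=\lambda^k/|d_k(A_0)|^2$.
   Context: A $k$-icube of norm $\lambda>0$ in $R^n$ is $(v_1|\dots|v_k)\in R^{n\times k}$ with $v_i^*v_j=\lambda$ if $i=j$ and $0$ otherwise ($v^*$ the conjugate transpose). $d_k(A_0)$ is the $k$-th determinantal divisor: the gcd of the $k\times k$ minors of $A_0$ (defined up to a unit; $|d_k(A_0)|^2$ is well defined). *)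

(* Both coefficient rings Z and Z[i] are realised as
   subrings of the algebraic complex numbers algC (fraction field inside). *)
From HB Require Import structures.
From mathcomp Require Import all_boot all_order all_algebra all_field.
Set Implicit Arguments. Unset Strict Implicit. Unset Printing Implicit Defensive.
Import Order.TTheory GRing.Theory Num.Theory.
Local Open Scope ring_scope.

Variant Rkind := RZ | RZi.

Definition inR (r : Rkind) (x : algC) : bool :=
  match r with
  | RZ => x \is a Num.int
  | RZi => ('Re x \is a Num.int) && ('Im x \is a Num.int)
  end.

Definition mxR (r : Rkind) m n (A : 'M[algC]_(m, n)) : Prop :=
  forall i j, inR r (A i j).

Definition ctr m n (A : 'M[algC]_(m, n)) : 'M[algC]_(n, m) := (map_mx (fun x : algC => x^*) A)^T.

Definition icube m k (A : 'M[algC]_(m, k)) (lam : algC) : Prop :=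
  0 < lam /\ ctr A *m A = lam%:M.

Definition inLambda (r : Rkind) n k (A : 'M[algC]_(n, k)) (w : 'cV[algC]_n) : Prop :=
  mxR r w /\ ctr A *m w = 0.

(* The columns of B form an R-basis of Lambda (so Lambda is free of rank p). *)
Definition R_basis_of_Lambda (r : Rkind) n k p (A : 'M[algC]_(n, k))
    (B : 'M[algC]_(n, p)) : Prop :=
  [/\ forall j, inLambda r A (col j B),
      (forall c : 'cV[algC]_p, mxR r c -> B *m c = 0 -> c = 0)
    & (forall w, inLambda r A w -> exists2 c : 'cV[algC]_p, mxR r c & w = B *m c)].

Definition dvdR (r : Rkind) (a b : algC) : Prop := exists2 q, inR r q & b = a * q.

Definition is_kminor n k (A : 'M[algC]_(n, k)) (x : algC) : Prop :=
  exists2 f : 'I_k -> 'I_n, injective f & x = \det (rowsub f A).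

Definition is_dk (r : Rkind) n k (A : 'M[algC]_(n, k)) (d : algC) : Prop :=
  [/\ inR r d,
      (forall x, is_kminor A x -> dvdR r d x)
    & (forall e, inR r e -> (forall x, is_kminor A x -> dvdR r e x) -> dvdR r e d)].

From HB Require Import structures.
From mathcomp Require Import all_boot all_order all_fingroup all_algebra all_field ring.
Set Implicit Arguments. Unset Strict Implicit. Unset Printing Implicit Defensive.
Import Order.TTheory GRing.Theory Num.Theory.
Local Open Scope ring_scope.

(* Both Z and Z[i] are norm-Euclidean (every complex number lies at distance < 1
   from Z[i]), so A can be row-reduced by an R-unimodular V to V A = [H; 0] with
   H square.  The conjugate transpose B0 of the last n - k rows of V is then an
   R-basis of Lambda, and det H is a gcd of the k x k minors of A: it divides them
   since A = W1 H with W1 integral, and every common divisor of the minors divides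
   det (V1 A) by the Cauchy-Binet expansion.  With Z = (A | B0) and the Gram matrix
   G = B0^* B0 we have Z^* Z = diag (lam I, G) and V Z = [H *; 0 G]; since
   |det V| = 1, comparing |det Z|^2 gives lam^k det G = |det H|^2 (det G)^2.  Any
   other basis differs from B0 by a matrix whose determinant is a unit of R, hence
   of absolute value 1, and so do any two gcds of the minors. *)

Lemma inRZE x : inR RZ x = (x \is a Num.int). Proof. by []. Qed.

Lemma inRZiE x : inR RZi x = ('Re x \is a Num.int) && ('Im x \is a Num.int).
Proof. by []. Qed.

Lemma inR_int r x : x \is a Num.int -> inR r x.
Proof.
case: r; rewrite ?inRZE ?inRZiE // => xZ; have /Creal_ReP -> := Rreal_int xZ.
by have /Creal_ImP -> := Rreal_int xZ; rewrite xZ int_num0.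
Qed.

Fact inR_subring_subproof r : subring_closed (inR r).
Proof.
have inRB x y : inR r x -> inR r y -> inR r (x - y).
  case: r; rewrite ?inRZE ?inRZiE; first exact: rpredB.
  by move=> /andP[? ?] /andP[? ?]; rewrite !raddfB /= !rpredB.
have inRM x y : inR r x -> inR r y -> inR r (x * y).
  case: {inRB} r; rewrite ?inRZE ?inRZiE; first exact: rpredM.
  by move=> /andP[? ?] /andP[? ?]; rewrite ReM ImM rpredB ?rpredD ?rpredM.
by split; [exact/inR_int/int_num1 | exact: inRB | exact: inRM].
Qed.

HB.instance Definition _ r :=
  GRing.isSubringClosed.Build algC (inR r) (inR_subring_subproof r).

Lemma memRE r x : (x \in inR r) = inR r x. Proof. by []. Qed.

Section IntegralMatrices.
Variable r : Rkind.

Lemma mxRP m n (M : 'M[algC]_(m, n)) : reflect (mxR r M) (M \is a mxOver (inR r)).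
Proof. exact: (iffP mxOverP). Qed.

Lemma mxR_mul m n p (A : 'M[algC]_(m, n)) (B : 'M_(n, p)) :
  mxR r A -> mxR r B -> mxR r (A *m B).
Proof. by move=> /mxRP AR /mxRP BR; apply/mxRP; apply: mxOverM. Qed.

Lemma mxR_ctr m n (A : 'M[algC]_(m, n)) : mxR r A -> mxR r (ctr A).
Proof.
move=> AR i j; rewrite !mxE; move: (AR j i); case: r; rewrite ?inRZE ?inRZiE.
  by move=> aZ; rewrite conj_Creal ?Rreal_int.
by rewrite Re_conj Im_conj rpredN.
Qed.

Lemma mxR_scalar n (c : algC) : inR r c -> mxR r (c%:M : 'M_n).
Proof. by move=> cR; apply/mxRP; rewrite mxOver_scalar ?rpred0. Qed.

Lemma inR_det n (A : 'M[algC]_n) : mxR r A -> inR r (\det A).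
Proof.
move=> AR; apply: rpred_sum => s _; apply: rpredM; first exact: rpred_sign.
by apply: rpred_prod => i _; apply: AR.
Qed.

Lemma normC2_nat x : inR r x -> `|x| ^+ 2 \is a Num.nat.
Proof.
case: r; rewrite ?inRZE ?inRZiE; first by move=> xZ; rewrite intr_normK ?natr_exp_even.
by case/andP=> ? ?; rewrite normC2_Re_Im rpredD ?natr_exp_even.
Qed.

Lemma inR_unit_norm x y : inR r x -> inR r y -> x * y = 1 -> `|x| = 1.
Proof.
move=> xR yR /(congr1 (fun z => `|z| ^+ 2)); rewrite normrM exprMn normr1 expr1n.
have /natrP[a Ea] := normC2_nat xR; have /natrP[b ->] := normC2_nat yR.
rewrite Ea -natrM => /eqP; rewrite pnatr_eq1 muln_eq1 => /andP[/eqP a1 _].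
by apply/eqP; rewrite -(pexpr_eq1 (n := 2)) // Ea a1.
Qed.

Lemma dvdR_norm_eq d e : dvdR r d e -> dvdR r e d -> `|d| = `|e|.
Proof.
move=> [q qR ->] [q' q'R Ed]; have [->|dn0] := eqVneq d 0; first by rewrite mul0r.
have qq' : q * q' = 1 by apply: (mulfI dn0); rewrite mulr1 mulrA -Ed.
by rewrite normrM (inR_unit_norm qR q'R qq') mulr1.
Qed.

End IntegralMatrices.

Lemma nearest_int (x : algC) : x \is Num.real ->
  exists2 m, m \is a Num.int & `|x - m| <= 2^-1.
Proof.
move=> xR; have hR : (2^-1 : algC) \is Num.real by rewrite realV realn.
have /andP[lo hi] := real_floor_itv (realD xR hR).
set m : algC := (Num.floor _)%:~R in lo hi *; exists m; first exact: intr_int.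
have mR : m \is Num.real by apply/Rreal_int/intr_int.
rewrite real_ler_norml ?rpredB //; apply/andP; split.
  by rewrite lerBrDr addrC lerBlDr.
rewrite intrD -/m (_ : m + 1%:~R = 2^-1 + m + 2^-1) in hi; last by field.
by rewrite lerBlDr ltW // -(ltrD2r 2^-1).
Qed.

Lemma approx_quotient r a b : inR r a -> inR r b -> b != 0 ->
  exists2 q, inR r q & `|a / b - q| < 1.
Proof.
move=> aR bR bn0; have half_lt1 : (2^-1 : algC) < 1 by rewrite invf_lt1 ?ltr0n ?ltr1n.
case: r aR bR; rewrite ?inRZE => aR bR.
  have zR : a / b \is Num.real by rewrite realM ?realV ?Rreal_int.
  have [m mZ hm] := nearest_int zR.
  by exists m; [exact: mZ | exact: le_lt_trans hm half_lt1].
have [m1 m1Z h1] := nearest_int (Creal_Re (a / b)).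
have [m2 m2Z h2] := nearest_int (Creal_Im (a / b)).
have [m1R m2R] := (Rreal_int m1Z, Rreal_int m2Z).
exists (m1 + 'i * m2); first by rewrite inRZiE Re_rect ?Im_rect ?m1Z.
rewrite -(expr_lt1 (n := 2)) // normC2_Re_Im !raddfB /= Re_rect ?Im_rect //.
have sq (t : algC) : t \is Num.real -> `|t| <= 2^-1 -> t ^+ 2 <= 2^-1 ^+ 2.
  by move=> tR ht; rewrite -real_normK // lerXn2r // nnegrE ?invr_ge0 ?ler0n.
apply: le_lt_trans (lerD (sq _ _ h1) (sq _ _ h2)) _; rewrite ?rpredB ?Creal_Re ?Creal_Im //.
by rewrite (_ : _ + _ = 2^-1) //; field.
Qed.

Lemma euclid r a b : inR r a -> inR r b -> b != 0 ->
  exists2 q, inR r q & `|a - q * b| < `|b|.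
Proof.
move=> aR bR bn0; have [q qR hq] := approx_quotient aR bR bn0.
exists q => //; rewrite -[a](divfK bn0) -mulrBl normrM.
by rewrite gtr_pMl ?normr_gt0.
Qed.

Section RowOperations.
Variables (r : Rkind) (n k : nat).
Implicit Types (P : {set 'I_n}) (M : 'M[algC]_(n, k)) (V : 'M[algC]_n).

Definition unimodular V := mxR r V /\ exists2 W, mxR r W & V *m W = 1%:M.

(* V is the identity outside the block P x P: multiplying by V only recombines
   the rows indexed by P. *)
Definition acts_on P V := forall a b, (a \notin P) || (b \notin P) -> V a b = (a == b)%:R.

Definition row_equiv P M M' := exists2 V, unimodular V /\ acts_on P V & M' = V *m M.

Lemma unimodular1 : unimodular 1%:M.
Proof.
have R1 : mxR r (1%:M : 'M_n) by apply/mxR_scalar/rpred1.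
by split=> //; exists 1%:M; rewrite ?mulmx1.
Qed.

Lemma unimodularM V1 V2 : unimodular V1 -> unimodular V2 -> unimodular (V1 *m V2).
Proof.
case=> V1R [W1 W1R VW1] [V2R [W2 W2R VW2]]; split; first exact: mxR_mul.
by exists (W2 *m W1); [exact: mxR_mul | rewrite mulmxA -(mulmxA V1) VW2 mulmx1].
Qed.

Lemma acts_on1 P : acts_on P 1%:M.
Proof. by move=> a b _; rewrite mxE. Qed.

Lemma acts_onM P V1 V2 : acts_on P V1 -> acts_on P V2 -> acts_on P (V1 *m V2).
Proof.
move=> A1 A2 a b /orP[aP|bP]; rewrite mxE.
  rewrite (bigD1 a) //= A1 ?aP // eqxx mul1r A2 ?aP // big1 ?addr0 // => t ta.
  by rewrite A1 ?aP // eq_sym (negbTE ta) mul0r.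
rewrite (bigD1 b) //= A2 ?bP ?orbT // eqxx mulr1 A1 ?bP ?orbT // big1 ?addr0 // => t tb.
by rewrite A2 ?bP ?orbT // (negbTE tb) mulr0.
Qed.

Lemma acts_onS P (Q : {set 'I_n}) V : P \subset Q -> acts_on P V -> acts_on Q V.
Proof.
move=> /subsetP PQ AP a b ab; apply: AP; move: ab.
by apply: contraLR; rewrite negb_or !negbK => /andP[/PQ -> /PQ ->].
Qed.

Lemma row_equiv_refl P M : row_equiv P M M.
Proof. by exists 1%:M; [split; [exact: unimodular1 | exact: acts_on1] | rewrite mul1mx]. Qed.

Lemma row_equiv_trans P M1 M2 M3 :
  row_equiv P M1 M2 -> row_equiv P M2 M3 -> row_equiv P M1 M3.
Proof.
move=> [V1 [U1 A1] ->] [V2 [U2 A2] ->]; exists (V2 *m V1); last by rewrite mulmxA.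
by split; [exact: unimodularM | exact: acts_onM].
Qed.

Lemma row_equivS P (Q : {set 'I_n}) M M' : P \subset Q -> row_equiv P M M' -> row_equiv Q M M'.
Proof. by move=> PQ [V [U A] ->]; exists V => //; split => //; apply: acts_onS A. Qed.

Lemma row_equiv_mxR P M M' : mxR r M -> row_equiv P M M' -> mxR r M'.
Proof. by move=> MR [V [[VR _] _] ->]; apply: mxR_mul. Qed.

Lemma row_equiv_out P M M' a b : row_equiv P M M' -> a \notin P -> M' a b = M a b.
Proof.
move=> [V [_ A] ->] aP; rewrite mxE (bigD1 a) //= A ?aP // eqxx mul1r big1 ?addr0 //.
by move=> t ta; rewrite A ?aP // eq_sym (negbTE ta) mul0r.
Qed.

Lemma row_equiv_zero P M M' c : row_equiv P M M' ->
  {in P, forall i, M i c = 0} -> {in P, forall i, M' i c = 0}.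
Proof.
move=> [V [_ A] ->] M0 i iP; rewrite mxE big1 // => t _.
have [tP|tP] := boolP (t \in P); first by rewrite M0 ?mulr0.
have /negbTE it : i != t by apply: contraNneq tP => <-.
by rewrite A ?tP ?orbT // it mul0r.
Qed.

Definition addrow (i l : 'I_n) (c : algC) : 'M[algC]_n := 1%:M + c *: delta_mx i l.

Lemma addrow_entry i l c a b : addrow i l c a b = (a == b)%:R + c * ((a == i) && (b == l))%:R.
Proof. by rewrite !mxE. Qed.

Lemma addrowE i l c M a b : (addrow i l c *m M) a b = M a b + (a == i)%:R * c * M l b.
Proof.
rewrite mulmxDl mul1mx -scalemxAl !mxE (bigD1 l) //= big1 ?addr0 => [|t tl].
  by rewrite !mxE eqxx andbT mulrCA mulrA.
by rewrite !mxE (negbTE tl) andbF mul0r.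
Qed.

Lemma addrowK i l c : i != l -> addrow i l c *m addrow i l (- c) = 1%:M.
Proof.
move=> il; rewrite /addrow mulmxDr mulmx1 mulmxDl mul1mx -!scalemxAl -!scalemxAr.
rewrite mul_delta_mx_cond eq_sym (negbTE il) mulr0n !scaler0 addr0 scaleNr.
by rewrite addrK.
Qed.

Lemma row_equiv_addrow P M i l c : i \in P -> l \in P -> i != l -> inR r c ->
  row_equiv P M (addrow i l c *m M).
Proof.
move=> iP lP il cR; exists (addrow i l c) => //.
have addrowR d : inR r d -> mxR r (addrow i l d).
  by move=> dR a b; rewrite -memRE addrow_entry rpredD ?rpredM ?rpred_nat.
split; first split; first exact: addrowR.
  by exists (addrow i l (- c)); [apply: addrowR; rewrite -memRE rpredN | exact: addrowK].
move=> a b abP; rewrite addrow_entry.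
suff /negbTE -> : ~~ ((a == i) && (b == l)) by rewrite mulr0 addr0.
by apply: contraL abP => /andP[/eqP -> /eqP ->]; rewrite iP lP.
Qed.

Lemma row_equiv_swap P M i l : i \in P -> l \in P ->
  row_equiv P M (row_perm (tperm i l) M).
Proof.
move=> iP lP; rewrite row_permE; exists (perm_mx (tperm i l)) => //.
have PR : mxR r (perm_mx (tperm i l)) by move=> a b; rewrite !mxE -memRE rpred_nat.
split; first by split=> //; exists (perm_mx (tperm i l)); rewrite // -perm_mxM tperm2 perm_mx1.
move=> a b abP; rewrite !mxE; congr (_%:R).
have fixed x : x \notin P -> tperm i l x = x.
  by move=> xP; rewrite tpermD //; apply: contraNneq xP => <-.
case/orP: abP => [/fixed -> // | /fixed bE].
by rewrite -{1}bE (inj_eq perm_inj).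
Qed.

Lemma clear_pair M c (j i : 'I_n) : j != i -> mxR r M ->
  exists2 M', row_equiv [set j; i] M M' & M' i c = 0.
Proof.
(* Induction on the integer |M i c|^2, which decreases strictly when row j is
   reduced modulo row i and the two rows are swapped. *)
move=> ji MR; have [N0 EN0] := natrP (normC2_nat (MR i c)).
have : `|M i c| ^+ 2 < N0.+1%:R by rewrite EN0 ltr_nat.
elim: N0.+1 M MR {EN0} => [|N IH] M MR HN.
  by rewrite le_gtF ?exprn_ge0 in HN.
have [Mi0|Mi0] := eqVneq (M i c) 0; first by exists M => //; exact: row_equiv_refl.
have [jP iP] : j \in [set j; i] /\ i \in [set j; i] by rewrite !inE !eqxx orbT.
have [q qR hq] := euclid (MR j c) (MR i c) Mi0.
pose M2 := row_perm (tperm j i) (addrow j i (- q) *m M).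
have e2 : row_equiv [set j; i] M M2.
  apply: row_equiv_trans (row_equiv_addrow _ jP iP ji _) (row_equiv_swap _ jP iP).
  by rewrite -memRE rpredN.
have [M' e' M'i] : exists2 M', row_equiv [set j; i] M2 M' & M' i c = 0.
  apply: IH; first exact: row_equiv_mxR e2.
  have /natrP[Ni ENi] := normC2_nat (MR i c).
  rewrite ENi ltr_nat ltnS -(ler_nat algC) -ENi in HN.
  by apply: lt_le_trans HN; rewrite ltrXn2r // mxE tpermR addrowE eqxx mul1r mulNr.
by exists M'; first exact: row_equiv_trans e2 e'.
Qed.

Lemma clear_below M (j : 'I_n) (c : 'I_k) : mxR r M ->
  exists2 M', row_equiv [set i : 'I_n | (j <= i)%N] M M' &
    forall i : 'I_n, (j < i)%N -> M' i c = 0.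
Proof.
move=> MR; suff /(_ n) [M' e' z'] t :
    exists2 M', row_equiv [set i : 'I_n | (j <= i)%N] M M' &
      forall i : 'I_n, (j < i < t)%N -> M' i c = 0.
  by exists M' => // i ji; apply: z'; rewrite ji ltn_ord.
elim: t => [|t [M1 e1 z1]].
  by exists M; [exact: row_equiv_refl | move=> i /andP[_]; rewrite ltn0].
have [/andP[jt tn] | ] := boolP (j < t < n)%N; last first.
  move=> jtn; exists M1 => // i /andP[ji]; rewrite ltnS leq_eqVlt => /orP[/eqP it|].
    by move: jtn; rewrite -it ji ltn_ord.
  by move=> it; rewrite z1 ?ji.
pose i0 := Ordinal tn; have ji0 : j != i0 by rewrite -val_eqE neq_ltn jt.
have [M2 e2 z2] := clear_pair c ji0 (row_equiv_mxR MR e1).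
exists M2.
  apply: row_equiv_trans e1 (row_equivS _ e2).
  by apply/subsetP => x; rewrite !inE => /orP[] /eqP ->; rewrite // ltnW.
move=> i /andP[ji]; rewrite ltnS leq_eqVlt => /orP[/eqP it|it].
  by rewrite (_ : i = i0) //; apply: val_inj.
rewrite (row_equiv_out _ e2) ?z1 ?ji //.
by rewrite !inE negb_or -!val_eqE /= !neq_ltn ji it orbT.
Qed.

Lemma echelon_form M : (k <= n)%N -> mxR r M ->
  exists2 V, unimodular V & forall (i : 'I_n) (c : 'I_k), (k <= i)%N -> (V *m M) i c = 0.
Proof.
move=> kn MR; suff /(_ k (leqnn k)) [M' [V [UV _] ->] z'] t : (t <= k)%N ->
    exists2 M', row_equiv setT M M' &
      forall (i : 'I_n) (c : 'I_k), (c < t)%N -> (t <= i)%N -> M' i c = 0.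
  by exists V => // i c; apply: z'.
elim: t => [_|t IH tk].
  by exists M => //; exact: row_equiv_refl.
have [M1 e1 z1] := IH (ltnW tk).
have tn : (t < n)%N := leq_trans tk kn.
have [M2 e2 z2] := clear_below (Ordinal tn) (Ordinal tk) (row_equiv_mxR MR e1).
exists M2; first exact: row_equiv_trans e1 (row_equivS (subsetT _) e2).
move=> i c; rewrite ltnS leq_eqVlt => /orP[/eqP ct ti|ct ti].
  by rewrite (_ : c = Ordinal tk) ?z2 //; apply: val_inj.
apply: (row_equiv_zero e2) => [x|]; last by rewrite inE ltnW.
by rewrite inE => tx; rewrite z1.
Qed.

End RowOperations.

Lemma det_mulmx_expand (R : comNzRingType) k n (X : 'M[R]_(k, n)) (A : 'M[R]_(n, k)) :
  \det (X *m A) = \sum_(g : {ffun 'I_k -> 'I_n}) (\prod_i X i (g i)) * \det (rowsub g A).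
Proof.
rewrite /determinant; under eq_bigr => s _.
  under eq_bigr => i _ do rewrite mxE.
  rewrite bigA_distr_bigA big_distrr /=.
  over.
rewrite exchange_big /=; apply: eq_bigr => g _; rewrite big_distrr /=.
apply: eq_bigr => s _; rewrite mulrCA -big_split /=.
by congr (_ * _); apply: eq_bigr => i _; rewrite mxE.
Qed.

Section Divisibility.
Variable r : Rkind.

Lemma dvdR_sum e I (s : seq I) (F : I -> algC) :
  (forall i, dvdR r e (F i)) -> dvdR r e (\sum_(i <- s) F i).
Proof.
move=> eF; elim/big_ind: _ => [|x y [a aR ->] [b bR ->]|i _]; last exact: eF.
  by exists 0; rewrite ?mulr0 // -memRE rpred0.
by exists (a + b); rewrite ?mulrDr // -memRE rpredD.
Qed.

Lemma dvdR_mull e c x : inR r c -> dvdR r e x -> dvdR r e (c * x).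
Proof. by move=> cR [a aR ->]; exists (c * a); [rewrite -memRE rpredM | rewrite mulrCA]. Qed.

Lemma dvdR_det_mulmx k n e (X : 'M[algC]_(k, n)) (A : 'M[algC]_(n, k)) :
  mxR r X -> (forall x, is_kminor A x -> dvdR r e x) -> dvdR r e (\det (X *m A)).
Proof.
move=> XR eA; rewrite det_mulmx_expand; apply: dvdR_sum => g.
apply: dvdR_mull; first by rewrite -memRE rpred_prod // => i _; apply: XR.
have [/injectiveP gI | /injectivePn [a [b ab gab]]] := boolP (injectiveb g).
  by apply: eA; exists g.
rewrite (determinant_alternate ab) => [|c]; last by rewrite !mxE gab.
by exists 0; rewrite ?mulr0 // -memRE rpred0.
Qed.

Lemma is_dk_norm n k (A : 'M[algC]_(n, k)) d d' :
  is_dk r A d -> is_dk r A d' -> `|d| = `|d'|.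
Proof.
by move=> [dR dA dmax] [d'R d'A d'max]; apply: dvdR_norm_eq; [apply: d'max | apply: dmax].
Qed.

End Divisibility.

Section ConjugateTranspose.

Lemma ctr_mul m n p (X : 'M[algC]_(m, n)) (Y : 'M[algC]_(n, p)) :
  ctr (X *m Y) = ctr Y *m ctr X.
Proof. by rewrite /ctr map_mxM trmx_mul. Qed.

Lemma ctrK m n (X : 'M[algC]_(m, n)) : ctr (ctr X) = X.
Proof. by apply/matrixP => i j; rewrite !mxE conjCK. Qed.

Lemma ctr1 n : ctr (1%:M : 'M[algC]_n) = 1%:M.
Proof. by rewrite /ctr map_mx1 trmx1. Qed.

Lemma ctr0 m n : ctr (0 : 'M[algC]_(m, n)) = 0.
Proof. by rewrite /ctr map_mx0 trmx0. Qed.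

Lemma ctrD m n (X Y : 'M[algC]_(m, n)) : ctr (X + Y) = ctr X + ctr Y.
Proof. by rewrite /ctr map_mxD linearD. Qed.

Lemma ctr_row_mx m n1 n2 (X : 'M[algC]_(m, n1)) (Y : 'M[algC]_(m, n2)) :
  ctr (row_mx X Y) = col_mx (ctr X) (ctr Y).
Proof. by rewrite /ctr map_row_mx tr_row_mx. Qed.

Lemma det_ctr n (X : 'M[algC]_n) : \det (ctr X) = (\det X)^*.
Proof. by rewrite /ctr det_tr det_map_mx. Qed.

Lemma mul_ctr_eq0 n (y : 'rV[algC]_n) : y *m ctr y = 0 -> y = 0.
Proof.
move/matrixP/(_ 0 0); rewrite !mxE => /eqP; under eq_bigr => i _ do rewrite !mxE -normCK.
rewrite psumr_eq0 => [/allP y0|i _]; last exact: exprn_ge0.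
apply/matrixP => i j; rewrite (ord1 i) mxE.
by have /implyP/(_ isT) := y0 j (mem_index_enum j); rewrite sqrf_eq0 normr_eq0 => /eqP.
Qed.

End ConjugateTranspose.

Section LambdaBases.
Variables (r : Rkind) (n k p : nat) (A : 'M[algC]_(n, k)).

Lemma Lambda_coords (X Y : 'M[algC]_(n, p)) : (forall j, inLambda r A (col j Y)) ->
  (forall w, inLambda r A w -> exists2 c : 'cV_p, mxR r c & w = X *m c) ->
  exists2 P : 'M_p, mxR r P & Y = X *m P.
Proof.
move=> YL XS; have [c cR Ec] := fin_all_exists2 (fun j => XS _ (YL j)).
exists (\matrix_(i, j) c j i 0) => [i j|]; first by rewrite mxE; apply: cR.
apply/matrixP => i j; move/matrixP/(_ i 0): (Ec j); rewrite !mxE => ->.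
by apply: eq_bigr => t _; rewrite mxE.
Qed.

Lemma Lambda_basis_change (B0 B : 'M[algC]_(n, p)) :
  R_basis_of_Lambda r A B0 -> R_basis_of_Lambda r A B ->
  exists P Q : 'M_p, [/\ mxR r P, mxR r Q, B = B0 *m P & P *m Q = 1%:M].
Proof.
move=> [B0L B0I B0S] [BL _ BS].
have [P PR EP] := Lambda_coords BL B0S; have [Q QR EQ] := Lambda_coords B0L BS.
exists P, Q; split=> //; apply/matrixP => i j.
have PQR : mxR r (col j (P *m Q - 1%:M)).
  apply/mxRP; move: PR QR => /mxRP PR /mxRP QR.
  rewrite colE mxOverM ?rpredB ?mxOverM ?mxOver_scalar ?rpred0 ?rpred1 //.
  by apply/mxOverP => a b; rewrite mxE rpred_nat.
have PQ0 : B0 *m col j (P *m Q - 1%:M) = 0.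
  by rewrite colE mulmxA mulmxBr mulmx1 mulmxA -EP -EQ subrr mul0mx.
move/matrixP/(_ i 0): (B0I _ PQR PQ0); rewrite !mxE => /eqP.
by rewrite subr_eq0 => /eqP.
Qed.

Lemma gram_det_basis_change (B0 B : 'M[algC]_(n, p)) :
  R_basis_of_Lambda r A B0 -> R_basis_of_Lambda r A B ->
  \det (ctr B *m B) = \det (ctr B0 *m B0).
Proof.
move=> bB0 bB; have [P [Q [PR QR -> PQ]]] := Lambda_basis_change bB0 bB.
have detPQ : \det P * \det Q = 1 by rewrite -det_mulmx PQ det1.
have nP := inR_unit_norm (inR_det PR) (inR_det QR) detPQ.
rewrite ctr_mul !mulmxA -(mulmxA (ctr P)) !det_mulmx det_ctr mulrAC -normCKC nP.
by rewrite expr1n mul1r.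
Qed.

End LambdaBases.

Section EchelonLattice.
Variables (r : Rkind) (k m : nat) (A : 'M[algC]_(k + m, k)) (lam : algC).
Variables V W : 'M[algC]_(k + m).
Hypotheses (AR : mxR r A) (Aicube : icube A lam) (VR : mxR r V) (WR : mxR r W).
Hypotheses (VW : V *m W = 1%:M) (VA0 : dsubmx (V *m A) = 0).

Local Notation V1 := (usubmx V).
Local Notation V2 := (dsubmx V).
Local Notation W1 := (lsubmx W).
Local Notation W2 := (rsubmx W).
Local Notation H := (V1 *m A).
Local Notation B0 := (ctr V2).

Lemma V2A : V2 *m A = 0. Proof. by rewrite mul_dsub_mx. Qed.

Lemma V2W : V2 *m W1 = 0 /\ V2 *m W2 = 1%:M.
Proof.
have : block_mx (V1 *m W1) (V1 *m W2) (V2 *m W1) (V2 *m W2) = block_mx 1%:M 0 0 1%:M.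
  by rewrite -mul_col_row vsubmxK hsubmxK VW scalar_mx_block.
by case/eq_block_mx=> _ _ -> ->.
Qed.

Lemma WV_decomp : W1 *m V1 + W2 *m V2 = 1%:M.
Proof. by rewrite -mul_row_col hsubmxK vsubmxK mulmx1C. Qed.

Lemma A_factor : A = W1 *m H.
Proof. by rewrite -[LHS]mul1mx -WV_decomp mulmxDl -!mulmxA V2A mulmx0 addr0. Qed.

Lemma det_H_neq0 : \det H != 0.
Proof.
case: Aicube => lam_gt0 AA; apply: contraTneq lam_gt0 => detH0.
have := congr1 determinant AA; rewrite {1}A_factor ctr_mul -mulmxA det_mulmx det_ctr.
rewrite detH0 conjC0 mul0r det_scalar => /esym/eqP.
by rewrite expf_eq0 => /andP[_ /eqP ->]; rewrite ltxx.
Qed.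

Lemma Lambda_basis_echelon : R_basis_of_Lambda r A B0.
Proof.
have [_ V2W2] := V2W; have V2R : mxR r V2 by move=> a b; rewrite mxE.
have AB0 : ctr A *m B0 = 0 by rewrite -ctr_mul V2A ctr0.
have W2B0 : ctr W2 *m B0 = 1%:M by rewrite -ctr_mul V2W2 ctr1.
split=> [j | c _ Bc0 | w [wR Aw]].
- split=> [a b|]; first by rewrite mxE; exact: (mxR_ctr V2R).
  by rewrite colE mulmxA AB0 mul0mx.
- by rewrite -[c]mul1mx -W2B0 -mulmxA Bc0 mulmx0.
have W2R : mxR r (ctr W2) by apply: mxR_ctr => a b; rewrite mxE.
exists (ctr W2 *m w); first exact: mxR_mul.
have unitH : ctr H \in unitmx by rewrite unitmxE unitfE det_ctr conjC_eq0 det_H_neq0.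
have W1w : ctr W1 *m w = 0.
  rewrite -[ctr W1 *m w]mul1mx -(mulVmx unitH) -!mulmxA [ctr H *m _]mulmxA.
  by rewrite -ctr_mul -A_factor Aw mulmx0.
by rewrite -[LHS]mul1mx -ctr1 -WV_decomp ctrD !ctr_mul mulmxDl -!mulmxA W1w mulmx0 add0r.
Qed.

Lemma is_dk_det_H : is_dk r A (\det H).
Proof.
have V1R : mxR r V1 by move=> a b; rewrite mxE.
split=> [|x [f _ ->]|e _]; first exact/inR_det/mxR_mul.
  exists (\det (rowsub f W1)); first by apply: inR_det => a b; rewrite !mxE.
  by rewrite {1}A_factor rowsubE mulmxA -rowsubE det_mulmx mulrC.
exact: dvdR_det_mulmx.
Qed.

Lemma gram_det_echelon : \det (ctr B0 *m B0) = lam ^+ k / `|\det H| ^+ 2.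
Proof.
case: Aicube => _ AA; have [_ V2W2] := V2W.
set G := ctr B0 *m B0; have GE : G = V2 *m B0 by rewrite /G ctrK.
have AB0 : ctr A *m B0 = 0 by rewrite -ctr_mul V2A ctr0.
have B0A : ctr B0 *m A = 0 by rewrite -[A]ctrK -ctr_mul AB0 ctr0.
have detG_neq0 : \det G != 0.
  apply/negP => /det0P [v vn0 vG].
  have vV2 : v *m V2 = 0.
    by apply: mul_ctr_eq0; rewrite ctr_mul !mulmxA -(mulmxA v) -GE vG mul0mx.
  by move: vn0; rewrite -[v]mulmx1 -V2W2 mulmxA vV2 mul0mx eqxx.
have detG_real : (\det G)^* = \det G by rewrite -det_ctr /G ctr_mul ctrK.
pose Z := row_mx A B0.
have detZZ : \det (ctr Z *m Z) = lam ^+ k * \det G.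
  by rewrite ctr_row_mx mul_col_row AB0 B0A AA det_ublock det_scalar.
have detVZ : \det V * \det Z = \det H * \det G.
  by rewrite -det_mulmx -{1}[V]vsubmxK mul_col_row V2A -GE det_ublock.
have normV : `|\det V| = 1.
  by apply: (inR_unit_norm (inR_det VR) (inR_det WR)); rewrite -det_mulmx VW det1.
have : lam ^+ k * \det G = `|\det H| ^+ 2 * \det G * \det G.
  rewrite -detZZ det_mulmx det_ctr -normCKC -[`|\det Z|]mul1r -normV -normrM detVZ.
  by rewrite normrM exprMn [`|\det G| ^+ 2]normCKC detG_real mulrA.
move/(mulIf detG_neq0) => ->.
by rewrite mulrC mulKf // sqrf_eq0 normr_eq0 det_H_neq0.
Qed.

End EchelonLattice.

Lemma Lambda_free_disc r k m (A : 'M[algC]_(k + m, k)) lam :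
  mxR r A -> icube A lam ->
  (exists B : 'M[algC]_(k + m, m), mxR r B /\ R_basis_of_Lambda r A B) /\
  (exists d, is_dk r A d) /\
  (forall (B : 'M[algC]_(k + m, m)) (d : algC),
     R_basis_of_Lambda r A B -> is_dk r A d ->
     \det (ctr B *m B) = lam ^+ k / `|d| ^+ 2).
Proof.
move=> AR Aic; have [V [VR [W WR VW]] VA] := echelon_form (leq_addr m k) AR.
have VA0 : dsubmx (V *m A) = 0 by apply/matrixP => i c; rewrite mxE VA ?mxE ?leq_addr.
have basis := Lambda_basis_echelon Aic VR WR VW VA0.
have dkH := is_dk_det_H AR VR WR VW VA0.
split; first by exists (ctr (dsubmx V)); split=> //; apply: mxR_ctr => a b; rewrite mxE.
split=> [|B d bB dk]; first by exists (\det (usubmx V *m A)).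
rewrite (gram_det_basis_change basis bB) (gram_det_echelon Aic VR WR VW VA0).
by rewrite (is_dk_norm dk dkH).
Qed.

Theorem mainTheorem15 (r : Rkind) (n k : nat) (A0 : 'M[algC]_(n, k)) (lam : algC) :
  (1 <= k)%N -> (k < n)%N -> mxR r A0 -> icube A0 lam ->
  (exists B : 'M[algC]_(n, n - k), mxR r B /\ R_basis_of_Lambda r A0 B) /\
  (exists d, is_dk r A0 d) /\
  (forall (B : 'M[algC]_(n, n - k)) (d : algC),
     R_basis_of_Lambda r A0 B -> is_dk r A0 d ->
     \det (ctr B *m B) = lam ^+ k / `|d| ^+ 2).
Proof.
move=> _ /ltnW/subnKC; move: (n - k)%N => m En; subst n.
exact: Lambda_free_disc.
Qed.
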